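(* CGTDS$^F$ reduces (via a computable many-one reduction) to CGTDS.
   Context: An instance of CGTDS consists of a rational discount factor $0<\lambda<1$, a rational target $t$, rational weights $a_1,\dots,a_k$, and an $\omega$-regular expression $e$ over $\{a_1,\dots,a_k\}$; it asks whether there is an infinite $w\in\{a_1,\dots,a_k\}^\omega$ in the language of $e$ with $\sum_{i=0}^\infty w(i)\lambda^i=t$. An instance of CGTDS$^F$ has the same data except that $e$ is a regular expression, and it asks whether there is a finite $w=w(0)\cdots w(n-1)\in\{a_1,\dots,a_k\}^*$ in the language of $e$ with $\sum_{i=0}^{n-1} w(i)\lambda^i=t$. *)

From HB Require Import structures.
From mathcomp Require Import all_boot all_order all_algebra.
Set Implicit Arguments. Unset Strict Implicit. Unset Printing Implicit Defensive.
Import Order.TTheory GRing.Theory Num.Theory.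
Local Open Scope ring_scope.

(* Letters of words are the weights themselves (rationals). *)

Inductive regex : Type :=
  | REmpty : regex
  | REps : regex
  | RAtom : rat -> regex
  | RCat : regex -> regex -> regex
  | RAlt : regex -> regex -> regex
  | RStar : regex -> regex.

Fixpoint rlang (e : regex) (w : seq rat) : Prop :=
  match e with
  | REmpty => False
  | REps => w = [::]
  | RAtom a => w = [:: a]
  | RCat e1 e2 => exists u v, w = u ++ v /\ rlang e1 u /\ rlang e2 v
  | RAlt e1 e2 => rlang e1 w \/ rlang e2 w
  | RStar e1 => exists ws : seq (seq rat),
      w = flatten ws /\ (forall u, u \in ws -> rlang e1 u)
  end.

Fixpoint ratoms (e : regex) : seq rat :=
  match e with
  | REmpty | REps => [::]
  | RAtom a => [:: a]
  | RCat e1 e2 | RAlt e1 e2 => ratoms e1 ++ ratoms e2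
  | RStar e1 => ratoms e1
  end.

Inductive oregex : Type :=
  | OCat : regex -> oregex -> oregex
  | OAlt : oregex -> oregex -> oregex
  | OOmega : regex -> oregex.

Fixpoint olang (e : oregex) (w : nat -> rat) : Prop :=
  match e with
  | OCat r o => exists u, rlang r u /\
      (forall i, (i < size u)%N -> w i = nth 0 u i) /\
      olang o (fun i => w (i + size u)%N)
  | OAlt o1 o2 => olang o1 w \/ olang o2 w
  | OOmega r => (* infinite concatenation of nonempty words of L(r) *)
      exists p : nat -> nat, p 0%N = 0%N /\ (forall n, (p n < p n.+1)%N) /\
      forall n, rlang r [seq w i | i <- index_iota (p n) (p n.+1)]
  end.

Fixpoint oatoms (e : oregex) : seq rat :=
  match e with
  | OCat r o => ratoms r ++ oatoms o
  | OAlt o1 o2 => oatoms o1 ++ oatoms o2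
  | OOmega r => ratoms r
  end.

Record instF := InstF {
  fl_lam : rat; fl_t : rat; fl_weights : seq rat; fl_expr : regex }.
Record inst := Inst {
  in_lam : rat; in_t : rat; in_weights : seq rat; in_expr : oregex }.

Definition validF (x : instF) : Prop :=
  0 < fl_lam x < 1 /\ {subset ratoms (fl_expr x) <= fl_weights x}.
Definition valid (x : inst) : Prop :=
  0 < in_lam x < 1 /\ {subset oatoms (in_expr x) <= in_weights x}.

Definition CGTDSF (x : instF) : Prop :=
  exists w : seq rat, all (fun a => a \in fl_weights x) w /\
    rlang (fl_expr x) w /\
    \sum_(i < size w) nth 0 w i * fl_lam x ^+ i = fl_t x.

Definition conv_to (s : nat -> rat) (l : rat) : Prop :=
  forall eps : rat, 0 < eps -> exists N, forall n, (N <= n)%N -> `|s n - l| < eps.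

Definition CGTDS (x : inst) : Prop :=
  exists w : nat -> rat, (forall i, w i \in in_weights x) /\
    olang (in_expr x) w /\
    conv_to (fun n => \sum_(i < n) w i * in_lam x ^+ i) (in_t x).

(** The (evidently computable) reduction: add the weight 0 and append 0^omega. *)
Definition reduction (x : instF) : inst :=
  Inst (fl_lam x) (fl_t x) (rcons (fl_weights x) 0) (OCat (fl_expr x) (OOmega (RAtom 0))).

From HB Require Import structures.
From mathcomp Require Import all_boot all_order all_algebra.
From mathcomp Require Import zify.
Set Implicit Arguments. Unset Strict Implicit. Unset Printing Implicit Defensive.
Import Order.TTheory GRing.Theory Num.Theory.
Local Open Scope ring_scope.

(* The words of [L(e) 0^omega] are exactly the paddings [u 0 0 0 ...] of the
   words [u] of [L(e)], and the partial discounted sums of such a padding are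
   constant, equal to the discounted sum of [u], from index [size u] on.  An
   eventually constant sequence converges only to its final value, so both
   instances ask for the same [u]. *)

Lemma rlang_sub_ratoms e u : rlang e u -> {subset u <= ratoms e}.
Proof.
elim: e u => [||a|e1 IH1 e2 IH2|e1 IH1 e2 IH2|e1 IH1] u //=.
- by move=> -> x.
- by move=> -> x.
- move=> [u1 [u2 [-> [h1 h2]]]] x; rewrite !mem_cat => /orP [] hx.
  + by rewrite (IH1 _ h1 x hx).
  + by rewrite (IH2 _ h2 x hx) orbT.
- move=> [h|h] x hx; rewrite mem_cat.
  + by rewrite (IH1 _ h x hx).
  + by rewrite (IH2 _ h x hx) orbT.
- move=> [ws [-> hws]] x /flattenP [v vin xv].
  exact: (IH1 _ (hws _ vin) x xv).
Qed.

Lemma olang_omega_atom a w : olang (OOmega (RAtom a)) w <-> forall i, w i = a.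
Proof.
split=> [[p [p0 [_ hblk]]]|hw] /=; last first.
  exists id; split=> //; split=> // n.
  by rewrite /index_iota subSnn /= hw.
have blk_single n : [seq w i | i <- index_iota (p n) (p n.+1)] = [:: a] := hblk n.
have p_id n : p n = n.
  elim: n => [//|n IH]; have := congr1 size (blk_single n).
  rewrite size_map size_iota /=; lia.
by move=> i; have := blk_single i; rewrite !p_id /index_iota subSnn => -[].
Qed.

Lemma olang_cat_omega_atom r a w :
  olang (OCat r (OOmega (RAtom a))) w <->
  exists2 u, rlang r u & forall i, w i = nth a u i.
Proof.
split=> [[u [hu [hpre /olang_omega_atom hsuf]]]|[u hu hw]].
  exists u => // i; case: (ltnP i (size u)) => hi.
    by rewrite hpre // (set_nth_default 0).
  by rewrite nth_default // -(subnK hi) hsuf.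
exists u; split=> //; split=> [i hi|].
  by rewrite hw (set_nth_default 0).
by apply/olang_omega_atom => i; rewrite hw nth_default // leq_addl.
Qed.

Lemma big_ord_vanishing_tail (R : nmodType) (F : nat -> R) m n :
  (m <= n)%N -> (forall i, (m <= i)%N -> F i = 0) ->
  \sum_(i < n) F i = \sum_(i < m) F i.
Proof.
move=> le_mn F0; rewrite (big_ord_widen _ F le_mn) [RHS]big_mkcond.
by apply: eq_bigr => i _; case: ltnP => // /F0.
Qed.

Lemma conv_to_eventually_const (s : nat -> rat) m S :
  (forall n, (m <= n)%N -> s n = S) -> forall t, conv_to s t <-> S = t.
Proof.
move=> sS t; split=> [hconv|<- eps eps_gt0]; last first.
  by exists m => n /sS ->; rewrite subrr normr0.
apply/eqP/negPn/negP => neq_St.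
have dist_gt0 : 0 < `|S - t| by rewrite normr_gt0 subr_eq0.
have [N hN] := hconv _ dist_gt0.
by have := hN (maxn N m) (leq_maxl _ _); rewrite sS ?leq_maxr // ltxx.
Qed.

Lemma discounted_sum_nth0 (R : pzSemiRingType) (u : seq R) lam n :
  (size u <= n)%N ->
  \sum_(i < n) nth 0 u i * lam ^+ i = \sum_(i < size u) nth 0 u i * lam ^+ i.
Proof.
move=> le_un.
apply: (big_ord_vanishing_tail (F := fun i => nth 0 u i * lam ^+ i) le_un).
by move=> i hi; rewrite nth_default // mul0r.
Qed.

Lemma valid_reduction x : validF x -> valid (reduction x).
Proof.
move=> [lam_bounds sub_e]; split=> //= a.
rewrite mem_cat mem_rcons in_cons => /orP [/sub_e ->|]; first by rewrite orbT.
by rewrite mem_seq1 => ->.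
Qed.

Theorem theorem6 :
  forall x : instF, validF x ->
    valid (reduction x) /\ (CGTDSF x <-> CGTDS (reduction x)).
Proof.
move=> x valid_x; split; first exact: valid_reduction.
case: x valid_x => lam t ws e [_ sub_e]; rewrite /CGTDSF /CGTDS /=.
split=> [[u [u_ws [hu sum_u]]]|[w [_ [/olang_cat_omega_atom [u hu hw] hconv]]]].
- exists (nth 0 u); split; [|split].
  + move=> i; rewrite mem_rcons in_cons; case: (ltnP i (size u)) => hi.
      by rewrite (allP u_ws) ?orbT // mem_nth.
    by rewrite nth_default.
  + by apply/olang_cat_omega_atom; exists u.
  + have sum_u_pad n : (size u <= n)%N -> \sum_(i < n) nth 0 u i * lam ^+ i = t.
      by move=> /discounted_sum_nth0 ->.
    exact/(conv_to_eventually_const sum_u_pad).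
- exists u; split; [|split=> //].
    by apply/allP => a /(rlang_sub_ratoms hu) /sub_e.
  have sum_w n : (size u <= n)%N ->
      \sum_(i < n) w i * lam ^+ i = \sum_(i < size u) nth 0 u i * lam ^+ i.
    move=> le_un; rewrite -(discounted_sum_nth0 lam le_un).
    by apply: eq_bigr => i _; rewrite hw.
  exact/(conv_to_eventually_const sum_w).
Qed.
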